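(* Let $A\subseteq\Omega$. If there exists a $\mathcal{P}$-e-process $(E_t)_{t\in\mathbb{N}_0}$ with $\sup_{t\in\mathbb{N}_0}E_t=\infty$ at every point of $A$, then there exists a $\mathcal{P}$-e-process $(E'_t)_{t\in\mathbb{N}_0}$ with $\lim_{t\to\infty}E'_t=\infty$ at every point of $A$; consequently $\mu^*(A)=0$.
   Context: Standing setup: $(\Omega, (\mathcal{F}_t)_{t\in\mathbb{N}_0}, \mathcal{F})$ is a filtered measurable space with $\mathcal{F} = \sigma\big(\bigcup_{t} \mathcal{F}_t\big)$. A stopping time is a map $\tau:\Omega\to\mathbb{N}_0\cup\{\infty\}$ with $\{\tau \le t\}\in\mathcal{F}_t$ for all $t$; $\mathcal{T}$ denotes the set of all stopping times. $\mathcal{P}$ is an arbitrary family of probability measures on $\mathcal{F}$. The inverse-capital measure is defined for every $A\subseteq\Omega$ by $\mu^*(A) = \inf_{\tau\in\mathcal{T}:\, A\subseteq\{\tau<\infty\}} \sup_{\mathbb{P}\in\mathcal{P}} \mathbb{P}(\tau<\infty)$. A $\mathcal{P}$-e-process is a nonnegative (possibly $[0,\infty]$-valued) process $(E_t)_{t\in\mathbb{N}_0}$ adapted to $(\mathcal{F}_t)$ such that $\mathbb{E}_{\mathbb{P}}[E_\tau]\le 1$ for every $\mathbb{P}\in\mathcal{P}$ and every $\tau\in\mathcal{T}$, with the convention $E_\infty=\limsup_{t\to\infty}E_t$. *)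

From HB Require Import structures.
From mathcomp Require Import all_boot all_order all_algebra.
From mathcomp Require Import all_classical all_reals all_analysis measurable_realfun.
Set Implicit Arguments. Unset Strict Implicit. Unset Printing Implicit Defensive.
Import Order.TTheory GRing.Theory Num.Theory.
Local Open Scope classical_set_scope.
Local Open Scope ring_scope.
Local Open Scope ereal_scope.

Section Defs.
Context {d : measure_display} {T : measurableType d} {R : realType}.

Definition filtration (F : nat -> set_system T) : Prop :=
  [/\ (forall t, sigma_algebra setT (F t)),
      (forall s t, (s <= t)%N -> F s `<=` F t) &
      @measurable d T = <<s \bigcup_t F t >> ].

(* Stopping times tau : Omega -> N_0 u {oo}; None encodes oo. *)
Definition stopping_time (F : nat -> set_system T) (tau : T -> option nat) : Prop :=
  forall t, F t [set x | exists2 n, tau x = Some n & (n <= t)%N].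

Definition stopped (E : nat -> T -> \bar R) (tau : T -> option nat) (x : T) : \bar R :=
  match tau x with
  | Some n => E n x
  | None => limn_esup (fun t => E t x)
  end.

Definition adapted (F : nat -> set_system T) (E : nat -> T -> \bar R) : Prop :=
  forall t (B : set (\bar R)), measurable B -> F t (E t @^-1` B).

Definition e_process (F : nat -> set_system T) (PP : set (probability T R))
    (E : nat -> T -> \bar R) : Prop :=
  [/\ (forall t x, 0 <= E t x),
      adapted F E &
      (forall P tau, PP P -> stopping_time F tau ->
         \int[P]_x stopped E tau x <= 1)].

(* sup over PP of P(tau < oo), as a supremum of a family in [0,1]
   (hence 0 when PP is empty). *)
Definition sup_prob (PP : set (probability T R)) (S : set T) : \bar R :=
  ereal_sup ([set 0] `|` [set P S | P in PP]).

Definition mu_star (F : nat -> set_system T) (PP : set (probability T R)) (A : set T) : \bar R :=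
  ereal_inf [set sup_prob PP [set x | tau x <> None] |
               tau in [set tau | stopping_time F tau /\
                                 A `<=` [set x | tau x <> None]]].

End Defs.

From HB Require Import structures.
From mathcomp Require Import all_boot all_order all_algebra.
From mathcomp Require Import all_classical all_reals all_analysis measurable_realfun.
Import Order.TTheory GRing.Theory Num.Theory.
Local Open Scope classical_set_scope.
Local Open Scope ring_scope.
Local Open Scope ereal_scope.

(* Ville's inequality for stopped e-processes: for a stopping time tau, the
   event that E_n >= a for some n <= tau has probability at most 1/a under
   every P, because E stopped at the first such n has expectation at most 1.
   Betting 2^k on the k-th level 2^k 2^(k+1) gives
   E'_t = sum_k 2^k 1{E_n >= 2^k 2^(k+1) for some n <= t}; E'_tau is the same
   sum with t replaced by tau, of expectation at most
   sum_k 2^k / (2^k 2^(k+1)) = 1, so E' is an e-process.  It is nondecreasing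
   and unbounded wherever sup_t E_t is infinite.  Finally the first time E
   exceeds 1/e covers A, and P(tau < oo) <= e for every P, so mu^*(A) = 0. *)

(* The integral of a nonnegative function is a supremum over the simple
   functions below it, so no measurability is needed for monotonicity. *)
Lemma ge0_le_integralT {d} {T : measurableType d} {R : realType}
    (mu : {measure set T -> \bar R}) (f g : T -> \bar R) :
  (forall x, 0 <= f x) -> (forall x, f x <= g x) ->
  \int[mu]_x f x <= \int[mu]_x g x.
Proof.
move=> f0 fg; have g0 x : 0 <= g x by exact: le_trans (f0 x) (fg x).
rewrite !ge0_integralTE //; apply: le_ereal_sup => _ [h hf <-].
by exists h => //= x; exact: le_trans (hf x) (fg x).
Qed.

Lemma limn_esup_le {R : realType} (u : (\bar R)^nat) (b : \bar R) :
  (forall n, u n <= b) -> limn_esup u <= b.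
Proof.
move=> ub; rewrite /limn_esup limf_esupE; apply: ge_ereal_inf.
exists (ereal_sup (u @` setT)); first by exists setT => //; exact: filterT.
by apply: ge_ereal_sup => _ [n _ <-].
Qed.

Lemma ereal_sup_range_eqy {I : Type} {R : realType} {u : I -> \bar R} (b : R) :
  ereal_sup (range u) = +oo -> exists i, b%:E <= u i.
Proof.
move=> supy; have : b%:E < ereal_sup (range u) by rewrite supy ltry.
by move=> /ereal_sup_gt [_ [i _ <-] /ltW]; exists i.
Qed.

Lemma stopped_ge0 {d} {T : measurableType d} {R : realType}
    (G : nat -> T -> \bar R) tau x :
  (forall t x, 0 <= G t x) -> 0 <= stopped G tau x.
Proof.
move=> G0; rewrite /stopped; case: (tau x) => [t|]; first exact: G0.
by apply: limf_esup_ge0; [exact: filter_not_empty | move=> t; exact: G0].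
Qed.

Lemma eseries_inv_pow2S (R : realType) :
  \sum_(k <oo) ((2 ^ k.+1)%:R^-1 : R)%:E = 1.
Proof.
have := @cvg_geometric_eseries_half R 1 0; rewrite expr0 divr1 => /cvg_lim <- //.
by apply: eq_eseriesr => k _; rewrite addn1 div1r.
Qed.

Definition leqo (n : nat) (b : option nat) : bool :=
  if b is Some m then (n <= m)%N else true.

Section filtration.
Context {d : measure_display} {T : measurableType d}.
Context {F : nat -> set_system T} (HF : filtration F).

Lemma filtrationE t : (F t).-sigma.-measurable = F t.
Proof. by case: HF => sF _ _; exact: measurable_g_measurableTypeE. Qed.

Lemma filtration_measurable t A : F t A -> measurable A.
Proof. by case: HF => _ _ -> FA; apply: sub_sigma_algebra; exists t. Qed.

Lemma filtration_le {s t} : (s <= t)%N -> F s `<=` F t.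
Proof. by case: HF => _ + _; apply. Qed.

Lemma stopping_time_cst t : stopping_time F (fun _ => Some t).
Proof.
move=> s; rewrite -filtrationE.
have [ts|st] := leqP t s.
  suff -> : [set x : T | exists2 n, Some t = Some n & (n <= s)%N] = setT by [].
  by apply/seteqP; split => x // _; exists t.
suff -> : [set x : T | exists2 n, Some t = Some n & (n <= s)%N] = set0 by [].
by apply/seteqP; split => x // -[n [<-]]; rewrite leqNgt st.
Qed.

Lemma stopping_time_None : stopping_time F (fun _ => None).
Proof.
move=> s; rewrite -filtrationE.
suff -> : [set x : T | exists2 n, None = Some n & (n <= s)%N] = set0 by [].
by apply/seteqP; split => x // -[].
Qed.

(* [n <= tau] is the complement of [tau <= n - 1], an event of time n - 1. *)
Lemma stopping_time_leqo tau n t : stopping_time F tau -> (n <= t)%N ->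
  F t [set x | leqo n (tau x)].
Proof.
move=> tau_st; rewrite -filtrationE; case: n => [_|n nt].
  suff -> : [set x | leqo 0 (tau x)] = setT by [].
  by apply/seteqP; split => x //= _; case: (tau x).
suff -> : [set x | leqo n.+1 (tau x)] =
    ~` [set x | exists2 m, tau x = Some m & (m <= n)%N].
  apply: measurableC; apply: sub_sigma_algebra.
  exact: filtration_le (ltnW nt) _ (tau_st n).
apply/seteqP; split => x /=; case: (tau x) => [m|] //=.
- by move=> nm [_ [<-]]; rewrite leqNgt nm.
- by move=> _ [].
- by move=> nm; rewrite ltnNge; apply/negP => mn; apply: nm; exists m.
Qed.

End filtration.

Lemma adapted_superlevel {d} {T : measurableType d} {R : realType}
    {F : nat -> set_system T} {E : nat -> T -> \bar R} (a : R) n :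
  adapted F E -> F n [set x | a%:E <= E n x].
Proof.
move=> E_ad.
suff -> : [set x | a%:E <= E n x] = E n @^-1` `[a%:E, +oo[%classic.
  exact/E_ad/emeasurable_itv.
by apply/seteqP; split => x /=; rewrite in_itv /= andbT.
Qed.

Section e_process.
Context {d : measure_display} {T : measurableType d} {R : realType}.
Variables (F : nat -> set_system T) (PP : set (probability T R)).
Variable E : nat -> T -> \bar R.
Hypotheses (HF : filtration F) (HE : e_process F PP E).

Definition crossed (a : R) (b : option nat) (x : T) (n : nat) : bool :=
  leqo n b && (a%:E <= E n x).

Definition reaches (a : R) (b : option nat) (x : T) : Prop :=
  exists n, crossed a b x n.

Definition hitting_time (a : R) (b : option nat) (x : T) : option nat :=
  match pselect (reaches a b x) with
  | left ex_n => Some (ex_minn ex_n)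
  | right _ => None
  end.

Lemma hitting_time_crossed {a b x m} :
  hitting_time a b x = Some m -> crossed a b x m.
Proof. by rewrite /hitting_time; case: pselect => // ? [<-]; case: ex_minnP. Qed.

Lemma hitting_time_le {a b x n} : crossed a b x n ->
  exists2 m, hitting_time a b x = Some m & (m <= n)%N.
Proof.
move=> cn; rewrite /hitting_time; case: pselect => [ex_n|]; last first.
  by case; exists n.
by case: ex_minnP => m _ min_m; exists m => //; exact: min_m.
Qed.

Lemma crossed_before_event a tau t : stopping_time F tau ->
  F t [set x | exists2 n, (n <= t)%N & crossed a (tau x) x n].
Proof.
move=> tau_st; rewrite -(filtrationE HF).
suff -> : [set x | exists2 n, (n <= t)%N & crossed a (tau x) x n] =
    \bigcup_(n in [set n | (n <= t)%N])
      ([set x | leqo n (tau x)] `&` [set x | a%:E <= E n x]).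
  apply: bigcup_measurable => n nt; apply: measurableI; apply: sub_sigma_algebra.
    exact: stopping_time_leqo.
  have E_ad : adapted F E by case: HE.
  exact: (filtration_le HF nt _ (adapted_superlevel a n E_ad)).
apply/seteqP; split => x /=.
  by move=> [n nt /andP[]]; exists n.
by move=> [n nt [? ?]]; exists n => //; apply/andP.
Qed.

Lemma hitting_time_stopping a tau : stopping_time F tau ->
  stopping_time F (fun x => hitting_time a (tau x) x).
Proof.
move=> tau_st t.
suff -> : [set x | exists2 m, hitting_time a (tau x) x = Some m & (m <= t)%N] =
    [set x | exists2 n, (n <= t)%N & crossed a (tau x) x n].
  exact: crossed_before_event.
apply/seteqP; split => x /= [n].
  by move=> /hitting_time_crossed ? ?; exists n.
by move=> nt /hitting_time_le [m -> mn]; exists m => //; exact: leq_trans mn nt.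
Qed.

Lemma measurable_reaches a tau : stopping_time F tau ->
  measurable [set x | reaches a (tau x) x].
Proof.
move=> tau_st.
suff -> : [set x | reaches a (tau x) x] =
    \bigcup_t [set x | exists2 n, (n <= t)%N & crossed a (tau x) x n].
  apply: bigcupT_measurable => t.
  exact/(filtration_measurable HF)/crossed_before_event.
apply/seteqP; split => x /=; first by move=> [n cn]; exists n => //; exists n.
by move=> [t _ [n _ cn]]; exists n.
Qed.

Lemma reaches_Some_event a t : F t [set x | reaches a (Some t) x].
Proof.
suff -> : [set x | reaches a (Some t) x] =
    [set x | exists2 n, (n <= t)%N & crossed a ((fun=> Some t) x) x n].
  exact/crossed_before_event/stopping_time_cst.
apply/seteqP; split => x /= [n]; last by exists n.
by move=> cn; exists n => //; case/andP: cn.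
Qed.

Lemma ville_inequality {P a tau} : PP P -> (0 < a)%R -> stopping_time F tau ->
  P [set x | reaches a (tau x) x] <= (a^-1)%:E.
Proof.
move=> PP_P a_gt0 tau_st; case: HE => E0 _ E_le1.
set S := [set x | reaches a (tau x) x].
have mS : measurable S := measurable_reaches a tau tau_st.
rewrite -[X in _ <= X]mule1 lee_pdivlMl //.
apply: le_trans (E_le1 P _ PP_P (hitting_time_stopping a tau tau_st)).
rewrite -[S]setIT -integral_indic // -ge0_integralZl_EFin //; first last.
- exact: ltW.
- exact/(measurable_EFinP _ (\1_S : T -> R))/measurable_indic.
apply: (ge0_le_integralT P) => x.
  by apply: mule_ge0; rewrite lee_fin; [exact: ltW | rewrite /indic ler0n].
rewrite /indic; case: (boolP (x \in S)) => [|_]; last by rewrite mule0 stopped_ge0.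
rewrite inE => -[n /hitting_time_le [m hm _]].
by rewrite mule1 /stopped hm; case/andP: (hitting_time_crossed hm).
Qed.

Definition level (k : nat) : R := ((2 ^ k)%:R * (2 ^ k.+1)%:R)%R.

Definition doubling_capital (b : option nat) (x : T) : \bar R :=
  \sum_(k <oo) ((2 ^ k)%:R%:E * (\1_[set y | reaches (level k) b y] x : R)%:E).

Lemma doubling_capital_term_ge0 k (S : set T) x :
  0 <= ((2 ^ k)%:R : R)%:E * (\1_S x : R)%:E.
Proof. by rewrite mule_ge0 // lee_fin. Qed.

Lemma doubling_capital_ge0 b x : 0 <= doubling_capital b x.
Proof. by apply: nneseries_ge0 => k _ _; exact: doubling_capital_term_ge0. Qed.

Lemma stopped_doubling_capital tau x :
  stopped (fun t => doubling_capital (Some t)) tau x <= doubling_capital (tau x) x.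
Proof.
rewrite /stopped; case: (tau x) => // /=.
apply: limn_esup_le => t; apply: lee_nneseries => k _ => [_|].
  exact: doubling_capital_term_ge0.
rewrite lee_wpmul2l ?lee_fin // /indic.
case: (boolP (x \in _)) => [|_]; last by rewrite ler0n.
rewrite !inE => -[n /andP[_ En]].
by suff -> : x \in [set y | reaches (level k) None y]; rewrite // inE; exists n.
Qed.

Lemma doubling_capital_adapted : adapted F (fun t => doubling_capital (Some t)).
Proof.
move=> t B mB; rewrite -(filtrationE HF).
suff mG : measurable_fun (setT : set (g_sigma_algebraType (F t)))
    (doubling_capital (Some t)).
  by rewrite -[_ @^-1` _]setTI; exact: mG.
apply: ge0_emeasurable_sum => k *; first exact: doubling_capital_term_ge0.
apply/measurable_funeM/measurable_EFinP/measurable_indic.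
apply: sub_sigma_algebra; exact: reaches_Some_event.
Qed.

Lemma doubling_capital_le1 {P tau} : PP P -> stopping_time F tau ->
  \int[P]_x doubling_capital (tau x) x <= 1.
Proof.
move=> PP_P tau_st.
(* Move the bound [tau x] inside the indicator sets, making them measurable. *)
have -> : (fun x => doubling_capital (tau x) x) = fun x =>
    \sum_(k <oo) ((2 ^ k)%:R%:E * (\1_[set y | reaches (level k) (tau y) y] x : R)%:E).
  by [].
have mS k : measurable [set y | reaches (level k) (tau y) y].
  exact: measurable_reaches _ _ tau_st.
rewrite integral_nneseries //; last first.
  by move=> k; apply/measurable_funeM/measurable_EFinP/measurable_indic.
rewrite -(eseries_inv_pow2S R); apply: lee_nneseries => k _ => [_|].
  by apply: integral_ge0 => x _; exact: doubling_capital_term_ge0.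
rewrite ge0_integralZl //; last exact/measurable_EFinP/measurable_indic.
rewrite integral_indic // setIT.
have level_gt0 : (0 < level k)%R by rewrite mulr_gt0 // ltr0n expn_gt0.
apply: le_trans (lee_wpmul2l _ (ville_inequality PP_P level_gt0 tau_st)) _.
  by rewrite lee_fin.
by rewrite -EFinM lee_fin /level invfM mulrA divff ?mul1r // pnatr_eq0 expn_eq0.
Qed.

Lemma doubling_capital_e_process :
  e_process F PP (fun t => doubling_capital (Some t)).
Proof.
split; [move=> t x; exact: doubling_capital_ge0 | exact: doubling_capital_adapted |].
move=> P tau PP_P tau_st; apply: le_trans (doubling_capital_le1 PP_P tau_st).
apply: (ge0_le_integralT P) => x; last exact: stopped_doubling_capital.
by apply: stopped_ge0 => t y; exact: doubling_capital_ge0.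
Qed.

Lemma doubling_capital_cvgy x : ereal_sup (range (fun t => E t x)) = +oo ->
  (fun t => doubling_capital (Some t) x) @ \oo --> +oo.
Proof.
move=> supE; apply/cvgeyPge => M.
have [k Mk] : exists k, (M <= (2 ^ k)%:R)%R.
  exists (Num.Def.trunc M).+1; apply: le_trans (ltW (truncnS_gt M)) _.
  by rewrite ler_nat ltnW // ltn_expl.
have [n En] := ereal_sup_range_eqy (level k) supE.
exists n => // t /= nt.
rewrite /doubling_capital (@nneseriesD1 _ _ k) //.
apply: lee_paddr.
  by apply: nneseries_ge0 => i _ _; exact: doubling_capital_term_ge0.
rewrite /indic; suff -> : x \in [set y | reaches (level k) (Some t) y].
  by rewrite mule1 lee_fin.
by rewrite inE; exists n; rewrite /crossed /= nt.
Qed.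

Lemma reaches_hitting_time a b x : reaches a b x <-> hitting_time a b x <> None.
Proof.
split; first by move=> [n /hitting_time_le [m -> _]].
by case hm: hitting_time => [m|] // _; exists m; exact: hitting_time_crossed hm.
Qed.

Lemma mu_star_eq0 A : (forall x, A x -> ereal_sup (range (fun t => E t x)) = +oo) ->
  mu_star F PP A = 0.
Proof.
move=> supE; apply/eqP; rewrite eq_le; apply/andP; split; last first.
  by apply: le_ereal_inf_tmp => _ [tau _ <-]; apply: ereal_sup_ubound; left.
apply/lee_addgt0Pr => e e_gt0; rewrite add0e.
have ie_gt0 : (0 < e^-1)%R by rewrite invr_gt0.
pose tau x := hitting_time e^-1 None x.
have tau_st : stopping_time F tau.
  exact: hitting_time_stopping _ _ (stopping_time_None HF).
apply: ge_ereal_inf; exists (sup_prob PP [set x | tau x <> None]).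
  exists tau => //; split => // x Ax; apply/reaches_hitting_time.
  by have [n En] := ereal_sup_range_eqy e^-1 (supE x Ax); exists n.
apply: ge_ereal_sup => _ [-> | [P PP_P <-]]; first by rewrite lee_fin ltW.
suff -> : [set x | tau x <> None] = [set x | reaches e^-1 None x].
  by have := ville_inequality PP_P ie_gt0 (stopping_time_None HF); rewrite invrK.
by apply/seteqP; split => x /reaches_hitting_time.
Qed.

End e_process.

Theorem mainTheorem11 (d : measure_display) (T : measurableType d) (R : realType)
    (F : nat -> set_system T) (PP : set (probability T R)) (A : set T) :
  filtration F ->
  (exists E : nat -> T -> \bar R, e_process F PP E /\
     (forall x, A x -> ereal_sup (range (fun t => E t x)) = +oo)) ->
  (exists E' : nat -> T -> \bar R, e_process F PP E' /\
     (forall x, A x -> (fun t => E' t x) @ \oo --> +oo)) /\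
  mu_star F PP A = 0.
Proof.
move=> HF [E [HE supE]]; split; last exact: mu_star_eq0 HF HE A supE.
exists (fun t => doubling_capital E (Some t)); split.
  exact: doubling_capital_e_process HF HE.
by move=> x Ax; apply: doubling_capital_cvgy; exact: supE.
Qed.
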